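(* Let $n$ and $0<n_1<\cdots<n_d<n$ be integers with $m_1=n_1$, $m_k=n_k-n_{k-1}$ ($2\le k\le d$), $m_{d+1}=n-n_d$, and regard $\mathrm{Flag}(n_1,\dots,n_d;n)=\{(VJ_1V^{\mathsf T},\dots,VJ_dV^{\mathsf T}):V\in\mathrm{O}(n)\}\subseteq(\mathbb{R}^{n\times n})^d$. Let $\mathfrak f=V(J_1,\dots,J_d)V^{\mathsf T}$. Then \[ \mathbb{T}_{\mathfrak f}\mathrm{Flag}(n_1,\dots,n_d;n)=\{V(AJ_1-J_1A,\dots,AJ_d-J_dA)V^{\mathsf T}: A\in\mathfrak{so}(n),\ A(p,p)=0 \text{ for } p=1,\dots,d+1\}. \] Equivalently, $\mathbb{T}_{\mathfrak f}\mathrm{Flag}(n_1,\dots,n_d;n)$ consists of the tuples $V(X_1,\dots,X_d)V^{\mathsf T}$ with $X_1,\dots,X_d$ symmetric $n\times n$ matrices satisfying \[ X_k(k,l)=-X_l(k,l),\quad X_k(p,q)=0,\quad X_k(k,k)=0 \] for all $1\le k,l\le d$ and $1\le p,q\le d+1$ with $p,q,l\neq k$.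
   Context: $J_k=\operatorname{diag}(-I_{m_1},\dots,-I_{m_{k-1}},I_{m_k},-I_{m_{k+1}},\dots,-I_{m_{d+1}})$. $V(X_1,\dots,X_d)V^{\mathsf T}$ denotes $(VX_1V^{\mathsf T},\dots,VX_dV^{\mathsf T})$. For an $n\times n$ matrix $M$, $M(p,q)\in\mathbb{R}^{m_p\times m_q}$ denotes its $(p,q)$ block in the partition $n=m_1+\cdots+m_{d+1}$. $\mathfrak{so}(n)$ is the space of real skew-symmetric $n\times n$ matrices. *)

From HB Require Import structures.
From mathcomp Require Import all_boot all_order all_algebra.
From mathcomp Require Import all_classical all_reals all_analysis.
Set Implicit Arguments. Unset Strict Implicit. Unset Printing Implicit Defensive.
Import Order.TTheory GRing.Theory Num.Theory.
Local Open Scope classical_set_scope.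
Local Open Scope ring_scope.

(* The flag is given by s = [:: n_1; ...; n_d] (so d = size s).
   Row/column indices are 0-based: i : 'I_n.  Blocks are 0-based too:
   block p (0 <= p <= d) is { i | n_p <= i < n_{p+1} } with n_0 = 0,
   n_{d+1} = n; i.e. paper block p+1. *)
Definition blk (s : seq nat) (i : nat) : nat := count (fun c => c <= i)%N s.

(* J_k (paper J_{k+1}) for 0-based k : +1 on block k, -1 elsewhere. *)
Definition Jmx (R : realType) (n : nat) (s : seq nat) (k : nat) : 'M[R]_n :=
  \matrix_(i, j) (if i == j then (if blk s i == k then 1 else -1) else 0).

Definition flag (R : realType) (n : nat) (s : seq nat)
  : set ('I_(size s) -> 'M[R]_n) :=
  [set F | exists V : 'M[R]_n, V *m V^T = 1%:M /\
                              F = (fun k : 'I_(size s) => V *m Jmx R n s k *m V^T)].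

Definition tangent_space (R : realType) (n d : nat)
  (M : set ('I_d -> 'M[R]_n)) (f : 'I_d -> 'M[R]_n) : set ('I_d -> 'M[R]_n) :=
  [set X | exists g : R -> 'I_d -> 'M[R]_n,
     (forall t, M (g t)) /\ g 0 = f /\
     (forall k i j, derivable (fun t => g t k i j) 0 1) /\
     X = (fun k => \matrix_(i, j) derive1 (fun t : R => g t k i j) 0)].

Arguments tangent_space {R n d} M f.
Arguments flag R n s : clear implicits.
Arguments Jmx R n s k : clear implicits.

(* A point of the flag is a tuple of commuting symmetric involutions
   [V J_k V^T].  Differentiating these three relations along a curve through
   [f] shows that [Y_k = V^T X_k V] satisfies the linear block conditions.
   Conversely, such [Y_k] are the commutators [[A, J_k]] of a skew-symmetric
   [A] vanishing on the diagonal blocks, whose entries are read off from the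
   [Y_k].  Finally, for skew-symmetric [A] a product [Q t] of Givens rotations
   is an orthogonal curve with [Q 0 = 1] and [Q'(0) = A], so the curve
   [V Q(t) J_k Q(t)^T V^T] in the flag has velocity [V [A, J_k] V^T]. *)

From HB Require Import structures.
From mathcomp Require Import all_boot all_order all_algebra.
From mathcomp Require Import all_classical all_reals all_analysis.
From mathcomp Require Import ring lra.
Import Order.TTheory GRing.Theory Num.Theory.
Local Open Scope classical_set_scope.
Local Open Scope ring_scope.

Set Implicit Arguments.
Unset Strict Implicit.
Unset Printing Implicit Defensive.

Section MatrixDerivative.
Variables (R : realType) (x : R).

Definition is_derive_mx m n (F : R -> 'M[R]_(m, n)) (D : 'M[R]_(m, n)) :=
  forall i j, is_derive x 1 (fun t => F t i j) (D i j).

Lemma is_derive_mx_cst m n (C : 'M[R]_(m, n)) : is_derive_mx (fun=> C) 0.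
Proof. by move=> i j; rewrite mxE; apply: is_derive_cst. Qed.

Lemma is_derive_mxD m n (F G : R -> 'M[R]_(m, n)) DF DG :
  is_derive_mx F DF -> is_derive_mx G DG ->
  is_derive_mx (fun t => F t + G t) (DF + DG).
Proof.
move=> dF dG i j; rewrite mxE.
have -> : (fun t => (F t + G t) i j) = (fun t => F t i j) + (fun t => G t i j).
  by apply/funext => t; rewrite !mxE.
exact: is_deriveD.
Qed.

Lemma is_derive_mx_trmx m n (F : R -> 'M[R]_(m, n)) D :
  is_derive_mx F D -> is_derive_mx (fun t => (F t)^T) D^T.
Proof. by move=> dF i j; rewrite mxE; under eq_fun do rewrite mxE; apply: dF. Qed.

Lemma is_derive_mxM m n p (F : R -> 'M[R]_(m, n)) (G : R -> 'M[R]_(n, p)) DF DG :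
  is_derive_mx F DF -> is_derive_mx G DG ->
  is_derive_mx (fun t => F t *m G t) (DF *m G x + F x *m DG).
Proof.
move=> dF dG i j; rewrite !mxE.
have -> : (fun t => (F t *m G t) i j) =
    \sum_(l < n) ((fun t => F t i l) * (fun t => G t l j)).
  by rewrite fct_sumE; apply/funext => t; rewrite mxE.
rewrite -big_split /=.
under [X in is_derive _ _ _ X]eq_bigr do rewrite addrC [DF i _ * _]mulrC.
by apply: is_derive_sum => l; apply: is_deriveM.
Qed.

Lemma is_derive_mxZ m n (h : R -> R) dh (C : 'M[R]_(m, n)) :
  is_derive x 1 h dh -> is_derive_mx (fun t => h t *: C) (dh *: C).
Proof.
move=> dh' i j; rewrite mxE mulrC.
have -> : (fun t => (h t *: C) i j) = C i j \*: h.
  by apply/funext => t; rewrite !mxE /= mulrC.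
exact: is_deriveZ.
Qed.

Lemma is_derive_mx_unique m n (F : R -> 'M[R]_(m, n)) D D' :
  is_derive_mx F D -> is_derive_mx F D' -> D = D'.
Proof.
move=> dF dF'; apply/matrixP => i j.
by have [_ <-] := dF i j; have [_ <-] := dF' i j.
Qed.

Lemma is_derive_mxM_eq m n p (F F' : R -> 'M[R]_(m, n)) (G G' : R -> 'M[R]_(n, p))
    DF DG DF' DG' :
  (forall t, F t *m G t = F' t *m G' t) ->
  is_derive_mx F DF -> is_derive_mx G DG ->
  is_derive_mx F' DF' -> is_derive_mx G' DG' ->
  DF *m G x + F x *m DG = DF' *m G' x + F' x *m DG'.
Proof.
move=> eFG dF dG dF' dG'; apply: (is_derive_mx_unique (is_derive_mxM dF dG)).
by rewrite (funext eFG); apply: is_derive_mxM.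
Qed.

Lemma is_derive_mxP m n (F : R -> 'M[R]_(m, n)) D :
  is_derive_mx F D <->
  (forall i j, derivable (fun t => F t i j) x 1) /\
  \matrix_(i, j) derive1 (fun t => F t i j) x = D.
Proof.
split=> [dF|[dF <-] i j].
  split=> [i j|]; first by have [] := dF i j.
  by apply/matrixP => i j; rewrite mxE derive1E; have [] := dF i j.
by rewrite mxE derive1E; apply: derivableP.
Qed.

End MatrixDerivative.

Section GivensRotation.
Variables (R : realType) (n : nat).
Implicit Types (i j : 'I_n).

Definition rot_gen i j : 'M[R]_n := delta_mx i j - delta_mx j i.
Definition rot_proj i j : 'M[R]_n := delta_mx i i + delta_mx j j.

Definition givens i j (th : R) : 'M[R]_n :=
  if i == j then 1%:M else 1%:M + (cos th - 1) *: rot_proj i j + sin th *: rot_gen i j.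

Lemma rot_gen_id i : rot_gen i i = 0.
Proof. exact: subrr. Qed.

Lemma trmx_rot_proj i j : (rot_proj i j)^T = rot_proj i j.
Proof. by rewrite linearD /= !trmx_delta. Qed.

Lemma trmx_rot_gen i j : (rot_gen i j)^T = - rot_gen i j.
Proof. by rewrite linearB /= !trmx_delta opprB. Qed.

Lemma rot_mul_table i j : i != j ->
  [/\ rot_proj i j *m rot_proj i j = rot_proj i j,
      rot_proj i j *m rot_gen i j = rot_gen i j,
      rot_gen i j *m rot_proj i j = rot_gen i j &
      rot_gen i j *m rot_gen i j = - rot_proj i j].
Proof.
move=> ij; have ji : j != i by rewrite eq_sym.
rewrite /rot_proj /rot_gen !(mulmxDl, mulmxDr, mulmxBl, mulmxBr, mulmxN, mulNmx).
rewrite !mul_delta_mx_cond !eqxx (negPf ij) (negPf ji) !mulr0n !mulr1n.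
by split; apply/matrixP => x y; rewrite !mxE; ring.
Qed.

Lemma givens0 i j : givens i j 0 = 1%:M.
Proof. by rewrite /givens cos0 sin0 subrr !scale0r !addr0 if_same. Qed.

Lemma givens_orthogonal i j th : givens i j th *m (givens i j th)^T = 1%:M.
Proof.
rewrite /givens; case: eqP => [_|/eqP ij]; first by rewrite trmx1 mulmx1.
have trig : (cos th - 1) * 2 + (cos th - 1) ^+ 2 + sin th ^+ 2 = 0.
  by rewrite -[RHS](subrr 1) -[X in _ = X - _](cos2Dsin2 th); ring.
have [PP PK KP KK] := rot_mul_table ij.
move: (trmx_rot_proj i j) (trmx_rot_gen i j) PP PK KP KK trig.
move: (rot_proj i j) (rot_gen i j) (cos th - 1) (sin th) => P K a b PT KT PP PK KP KK trig.
rewrite !linearD /= !linearZ /= trmx1 PT KT.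
rewrite !mulmx1 !mulmxN !mulmxDl -!scalemxAl !mul1mx PP PK KP KK.
apply: (@eq_trans _ _ (1%:M + (a * 2 + a ^+ 2 + b ^+ 2) *: P)).
  by apply/matrixP => x y; rewrite !mxE; ring.
by rewrite trig scale0r addr0.
Qed.

Lemma is_derive_givens i j (c : R) :
  is_derive_mx 0 (fun t => givens i j (c * t)) (c *: rot_gen i j).
Proof.
have dlin : is_derive (0 : R) 1 ( *%R c) c.
  by apply: is_derive_eq (mulr1 c); apply: is_deriveZ.
have dcos : is_derive (0 : R) 1 (fun t => cos (c * t) - 1) 0.
  have := is_derive1_comp (is_derive_cos (c * 0)) dlin.
  rewrite mulr0 sin0 oppr0 mul0r => dcos.
  by have := is_deriveB dcos (is_derive_cst (1 : R) (0 : R) 1); rewrite subr0.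
have dsin : is_derive (0 : R) 1 (fun t => sin (c * t)) c.
  by have := is_derive1_comp (is_derive_sin (c * 0)) dlin; rewrite mulr0 cos0 mul1r.
rewrite /givens; case: eqP => [<-|_].
  by rewrite rot_gen_id scaler0; apply: is_derive_mx_cst.
have -> : c *: rot_gen i j = 0 + 0 *: rot_proj i j + c *: rot_gen i j.
  by rewrite scale0r !add0r.
apply: is_derive_mxD; last exact: is_derive_mxZ dsin.
by apply: is_derive_mxD; [exact: is_derive_mx_cst | exact: is_derive_mxZ dcos].
Qed.

End GivensRotation.

Arguments rot_gen {R n} i j.
Arguments rot_proj {R n} i j.

Section OrthogonalCurve.
Variables (R : realType) (n : nat).
Implicit Types (A : 'M[R]_n) (l : seq ('I_n * 'I_n)).

(* The pairs [(i, j)] and [(j, i)] both rotate the [(i, j)]-plane, each by half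
   of the angle prescribed by [A]. *)
Definition givens_prod A l (t : R) : 'M[R]_n :=
  foldr (fun p M => givens p.1 p.2 (2^-1 * A p.1 p.2 * t) *m M) 1%:M l.

Lemma givens_prod_orthogonal A l t :
  givens_prod A l t *m (givens_prod A l t)^T = 1%:M.
Proof.
elim: l => [|p l IH] /=; first by rewrite trmx1 mulmx1.
by rewrite trmx_mul mulmxA -(mulmxA (givens _ _ _)) IH mulmx1 givens_orthogonal.
Qed.

Lemma givens_prod0 A l : givens_prod A l 0 = 1%:M.
Proof. by elim: l => [|p l IH] //=; rewrite IH mulr0 givens0 mulmx1. Qed.

Lemma is_derive_givens_prod A l :
  is_derive_mx 0 (givens_prod A l) (\sum_(p <- l) (2^-1 * A p.1 p.2) *: rot_gen p.1 p.2).
Proof.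
elim: l => [|p l IH] /=; first by rewrite big_nil; apply: is_derive_mx_cst.
have := is_derive_mxM (is_derive_givens p.1 p.2 (2^-1 * A p.1 p.2)) IH.
by rewrite big_cons givens_prod0 mulr0 givens0 mulmx1 mul1mx.
Qed.

Lemma skew_sum_rot_gen A : A^T = - A ->
  \sum_(p : 'I_n * 'I_n) (2^-1 * A p.1 p.2) *: rot_gen p.1 p.2 = A.
Proof.
move=> skA; rewrite -(pair_bigA _ (fun i j => (2^-1 * A i j) *: rot_gen i j)) /=.
under eq_bigr do under eq_bigr do rewrite scalerBr.
under eq_bigr do rewrite sumrB.
rewrite sumrB.
set H : 'M[R]_n := \matrix_(i, j) (2^-1 * A i j).
have -> : \sum_i \sum_j (2^-1 * A i j) *: delta_mx i j = H.
  by rewrite [RHS]matrix_sum_delta; apply: eq_bigr => i _; apply: eq_bigr => j _; rewrite mxE.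
have -> : \sum_i \sum_j (2^-1 * A i j) *: delta_mx j i = H^T.
  rewrite [RHS]matrix_sum_delta exchange_big /=.
  by apply: eq_bigr => i _; apply: eq_bigr => j _; rewrite !mxE.
apply/matrixP => i j; have := congr1 (fun M : 'M[R]_n => M i j) skA.
by rewrite !mxE => ->; field.
Qed.

Lemma skew_orthogonal_curve A : A^T = - A ->
  exists Q : R -> 'M[R]_n,
    [/\ forall t, Q t *m (Q t)^T = 1%:M, Q 0 = 1%:M & is_derive_mx 0 Q A].
Proof.
move=> skA; exists (givens_prod A (index_enum ('I_n * 'I_n)%type)).
split; [exact: givens_prod_orthogonal | exact: givens_prod0 |].
by rewrite -[X in is_derive_mx _ _ X](skew_sum_rot_gen skA); apply: is_derive_givens_prod.
Qed.

End OrthogonalCurve.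

Lemma orthogonal_conj_mul (F : comUnitRingType) n (W M N : 'M[F]_n) :
  W *m W^T = 1%:M -> W *m M *m W^T *m (W *m N *m W^T) = W *m (M *m N) *m W^T.
Proof.
move=> /mulmx1C WTW.
by rewrite !mulmxA -(mulmxA _ W^T W) WTW mulmx1.
Qed.

Lemma orthogonal_conj_inj (F : comUnitRingType) n (W : 'M[F]_n) :
  W *m W^T = 1%:M -> injective (fun M => W *m M *m W^T).
Proof.
move=> WWT M N /(congr1 (fun X => W^T *m X *m W)) /=.
by rewrite !mulmxA (mulmx1C WWT) !mul1mx -!mulmxA (mulmx1C WWT) !mulmx1.
Qed.

Section Flag.
Variables (R : realType) (n : nat) (s : seq nat).
Local Notation J k := (Jmx R n s k).

Definition Jsign (k i : nat) : R := if blk s i == k then 1 else -1.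

Lemma Jmx_diag k : J k = diag_mx (\row_i Jsign k i).
Proof.
apply/matrixP => i j; rewrite !mxE.
by case: (eqVneq i j) => [->|ne]; rewrite ?eqxx ?(negPf ne) ?mulr1n ?mulr0n.
Qed.

Lemma mulmxJ k (Y : 'M[R]_n) i j : (Y *m J k) i j = Y i j * Jsign k j.
Proof. by rewrite Jmx_diag mul_mx_diag !mxE. Qed.

Lemma mulJmx k (Y : 'M[R]_n) i j : (J k *m Y) i j = Jsign k i * Y i j.
Proof. by rewrite Jmx_diag mul_diag_mx !mxE. Qed.

Lemma trmx_Jmx k : (J k)^T = J k.
Proof. by rewrite Jmx_diag tr_diag_mx. Qed.

Lemma Jmx_sqr k : J k *m J k = 1%:M.
Proof.
apply/matrixP => i j; rewrite mulJmx !mxE /Jsign.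
case: (eqVneq i j) => [->|ne]; rewrite ?eqxx ?(negPf ne) ?mulr0 //.
by case: ifP; rewrite ?mulr1 ?mulN1r ?opprK.
Qed.

Lemma Jmx_comm k l : J k *m J l = J l *m J k.
Proof.
apply/matrixP => i j; rewrite mulJmx mulmxJ !mxE.
by case: (eqVneq i j) => [->|ne]; rewrite ?eqxx ?(negPf ne) ?mulr0 ?mul0r // mulrC.
Qed.

Lemma commutator_Jmx_entry k (A : 'M[R]_n) i j :
  (A *m J k - J k *m A) i j = A i j * (Jsign k j - Jsign k i).
Proof. by rewrite [LHS]mxE [X in _ + X]mxE mulmxJ mulJmx; ring. Qed.

Lemma linearized_Jmx_blocks (Y : 'I_(size s) -> 'M[R]_n) :
  (forall k : 'I_(size s), Y k *m J k + J k *m Y k = 0) ->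
  (forall k l : 'I_(size s), Y k *m J l + J k *m Y l = Y l *m J k + J l *m Y k) ->
  [/\ forall (k l : 'I_(size s)) (i j : 'I_n), l != k ->
        blk s i = k -> blk s j = l -> Y k i j = - Y l i j,
      forall (k : 'I_(size s)) (i j : 'I_n),
        blk s i <> k -> blk s j <> k -> Y k i j = 0 &
      forall (k : 'I_(size s)) (i j : 'I_n),
        blk s i = k -> blk s j = k -> Y k i j = 0].
Proof.
move=> Yanti Ycomm.
have anti k i j : Y k i j * Jsign k j + Jsign k i * Y k i j = 0.
  by have /matrixP/(_ i j) := Yanti k; rewrite [LHS]mxE [RHS]mxE mulmxJ mulJmx.
split=> [k l i j lk bik bjl|k i j /eqP bik /eqP bjk|k i j bik bjk].
- have /matrixP/(_ i j) := Ycomm k l; rewrite [LHS]mxE [RHS]mxE !mulmxJ !mulJmx /Jsign.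
  have lk' : (l : nat) != k := lk.
  by rewrite bik bjl !eqxx (negPf lk') eq_sym (negPf lk'); lra.
- by have := anti k i j; rewrite /Jsign (negPf bik) (negPf bjk); lra.
- by have := anti k i j; rewrite /Jsign bik bjk eqxx; lra.
Qed.

Lemma flag_point_relations (F : 'I_(size s) -> 'M[R]_n) :
  flag R n s F -> forall k l,
  [/\ (F k)^T = F k, F k *m F k = 1%:M & F k *m F l = F l *m F k].
Proof.
case=> W [hW ->] k l; rewrite !orthogonal_conj_mul // Jmx_sqr Jmx_comm mulmx1 hW.
by split=> //; rewrite !trmx_mul trmxK trmx_Jmx mulmxA.
Qed.

Lemma flag_velocity_linearized
    (g : R -> 'I_(size s) -> 'M[R]_n) (D : 'I_(size s) -> 'M[R]_n) :
  (forall t, flag R n s (g t)) -> (forall k, is_derive_mx 0 (g^~ k) (D k)) ->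
  forall k l, [/\ (D k)^T = D k,
    D k *m g 0 k + g 0 k *m D k = 0 &
    D k *m g 0 l + g 0 k *m D l = D l *m g 0 k + g 0 l *m D k].
Proof.
move=> gflag dg k l; split.
- have gsym : (fun t => (g t k)^T) = g^~ k.
    by apply: funext => t; case: (flag_point_relations (gflag t) k k).
  by apply: (@is_derive_mx_unique _ _ _ _ (fun t => (g t k)^T));
    [apply: is_derive_mx_trmx | rewrite gsym].
- rewrite (is_derive_mxM_eq _ (dg k) (dg k) (is_derive_mx_cst _ 1%:M) (is_derive_mx_cst _ 1%:M)).
    by rewrite mul0mx mulmx0 addr0.
  by move=> t; case: (flag_point_relations (gflag t) k k) => _ -> _; rewrite mulmx1.
- apply: is_derive_mxM_eq (dg k) (dg l) (dg l) (dg k) => t.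
  by case: (flag_point_relations (gflag t) k l).
Qed.

End Flag.

Section BlockGenerator.
Variables (R : realType) (n : nat) (s : seq nat) (Y : 'I_(size s) -> 'M[R]_n).
Hypothesis Ysym : forall k, (Y k)^T = Y k.
Hypothesis Ycross : forall (k l : 'I_(size s)) (i j : 'I_n), l != k ->
  blk s i = k -> blk s j = l -> Y k i j = - Y l i j.
Hypothesis Yoff : forall (k : 'I_(size s)) (i j : 'I_n),
  blk s i <> k -> blk s j <> k -> Y k i j = 0.
Hypothesis Ydiag : forall (k : 'I_(size s)) (i j : 'I_n),
  blk s i = k -> blk s j = k -> Y k i j = 0.
Local Notation J k := (Jmx R n s k).

(* [Y] extended by [0] to every block index, including the last block [size s],
   which carries no [J]. *)
Definition velocity_ext (p : nat) : 'M[R]_n := if insub p is Some k then Y k else 0.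
Local Notation Yx := velocity_ext.

Lemma velocity_extE (k : 'I_(size s)) : Yx k = Y k.
Proof. by rewrite /Yx valK. Qed.

Lemma velocity_ext_sym p (i j : 'I_n) : Yx p j i = Yx p i j.
Proof. by rewrite /Yx; case: insub => [k|]; rewrite ?mxE // -[in LHS]Ysym mxE. Qed.

Lemma velocity_ext_off p (i j : 'I_n) : blk s i <> p -> blk s j <> p -> Yx p i j = 0.
Proof. by rewrite /Yx; case: insubP => [k _ <-|_]; [exact: Yoff | rewrite mxE]. Qed.

Lemma velocity_ext_diag p (i j : 'I_n) : blk s i = p -> blk s j = p -> Yx p i j = 0.
Proof. by rewrite /Yx; case: insubP => [k _ <-|_]; [exact: Ydiag | rewrite mxE]. Qed.

Lemma velocity_ext_cross (i j : 'I_n) : blk s i != blk s j ->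
  (blk s i < size s)%N -> (blk s j < size s)%N ->
  Yx (blk s i) i j = - Yx (blk s j) i j.
Proof.
move=> ne lti ltj; rewrite (_ : blk s i = Ordinal lti) // (_ : blk s j = Ordinal ltj) //.
by rewrite !velocity_extE; apply: Ycross; rewrite // eq_sym.
Qed.

(* Since [([A, J_k]) i j = A i j * (Jsign k j - Jsign k i)], the entry of [A] in
   blocks [(p, q)], [p != q], is read off from [Y_q] when [q] carries a [J],
   and from [Y_p] otherwise. *)
Definition block_generator : 'M[R]_n := \matrix_(i, j)
  if blk s i == blk s j then 0
  else if (blk s j < size s)%N then Yx (blk s j) i j / 2
  else - Yx (blk s i) i j / 2.

Lemma trmx_block_generator : block_generator^T = - block_generator.
Proof.
apply/matrixP => i j; rewrite !mxE eq_sym.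
case: eqP => [_|/eqP ne]; first by rewrite oppr0.
have blk_le (i' : 'I_n) : (blk s i' <= size s)%N := count_size _ _.
case: (ltnP (blk s i)) => lti; case: (ltnP (blk s j)) => ltj.
- by rewrite velocity_ext_sym velocity_ext_cross // mulNr.
- by rewrite velocity_ext_sym mulNr opprK.
- by rewrite velocity_ext_sym mulNr.
- by case/negP: ne; rewrite eqn_leq (leq_trans (blk_le i) ltj) (leq_trans (blk_le j) lti).
Qed.

Lemma block_generator_diag (i j : 'I_n) : blk s i = blk s j -> block_generator i j = 0.
Proof. by move=> e; rewrite mxE e eqxx. Qed.

Lemma block_generator_commutator (k : 'I_(size s)) :
  Y k = block_generator *m J k - J k *m block_generator.
Proof.
apply/matrixP => i j; rewrite commutator_Jmx_entry -velocity_extE mxE /Jsign.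
case: (eqVneq (blk s i) (blk s j)) => [e|ne].
  rewrite e subrr mulr0; case: (eqVneq (blk s j) k) => [jk|jk].
    by apply: velocity_ext_diag; rewrite // e.
  by apply: velocity_ext_off; rewrite ?e; apply/eqP.
case: (eqVneq (blk s j) k) => [jk|jk].
  have ik : blk s i != k by rewrite -jk.
  by rewrite jk ltn_ord (negPf ik); lra.
case: (eqVneq (blk s i) k) => [ik|ik]; last first.
  by rewrite velocity_ext_off ?subrr ?mulr0 //; apply/eqP.
rewrite -ik; case: ltnP => [ltj|_]; last by lra.
have lti : (blk s i < size s)%N by rewrite ik.
by rewrite velocity_ext_cross //; lra.
Qed.

End BlockGenerator.

Section FlagTangentSpace.
Variables (R : realType) (n : nat) (s : seq nat) (V : 'M[R]_n).
Hypothesis hV : V *m V^T = 1%:M.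
Local Notation J k := (Jmx R n s k).
Local Notation d := (size s).
Local Notation f := (fun k : 'I_d => V *m J k *m V^T).

Definition skew_velocities : set ('I_d -> 'M[R]_n) :=
  [set X | exists A : 'M[R]_n, A^T = - A /\
     (forall i j : 'I_n, blk s i = blk s j -> A i j = 0) /\
     X = (fun k : 'I_d => V *m (A *m J k - J k *m A) *m V^T)].

Definition block_velocities : set ('I_d -> 'M[R]_n) :=
  [set X | exists Y : 'I_d -> 'M[R]_n,
     (forall k, (Y k)^T = Y k) /\
     (forall (k l : 'I_d) (i j : 'I_n), l != k ->
        blk s i = k -> blk s j = l -> Y k i j = - Y l i j) /\
     (forall (k : 'I_d) (i j : 'I_n),
        blk s i <> k -> blk s j <> k -> Y k i j = 0) /\
     (forall (k : 'I_d) (i j : 'I_n),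
        blk s i = k -> blk s j = k -> Y k i j = 0) /\
     X = (fun k => V *m Y k *m V^T)].

Lemma tangent_flag_sub_block : tangent_space (flag R n s) f `<=` block_velocities.
Proof.
move=> _ [g [gflag [g0 [dg ->]]]].
set D := fun k => \matrix_(i, j) derive1 (fun t => g t k i j) 0.
have dD k : is_derive_mx 0 (g^~ k) (D k) by apply/is_derive_mxP.
pose Y k := V^T *m D k *m V.
have DE k : D k = V *m Y k *m V^T.
  by rewrite /Y !mulmxA hV mul1mx -mulmxA hV mulmx1.
clearbody Y.
have g0E k : g 0 k = V *m J k *m V^T by rewrite g0.
have conjE := orthogonal_conj_inj hV.
have [Ysym Yanti Ycomm] : [/\ forall k : 'I_d, (Y k)^T = Y k,
    forall k : 'I_d, Y k *m J k + J k *m Y k = 0 &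
    forall k l : 'I_d, Y k *m J l + J k *m Y l = Y l *m J k + J l *m Y k].
  split=> [k|k|k l]; apply: conjE => /=.
  - have [+ _ _] := flag_velocity_linearized gflag dD k k.
    by rewrite DE !trmx_mul trmxK mulmxA.
  - have [_ + _] := flag_velocity_linearized gflag dD k k.
    by rewrite !DE g0E !orthogonal_conj_mul // mulmxDr mulmxDl mulmx0 mul0mx.
  - have [_ _ +] := flag_velocity_linearized gflag dD k l.
    by rewrite !DE !g0E !orthogonal_conj_mul // !mulmxDr !mulmxDl.
have [Ycross Yoff Ydiag] := linearized_Jmx_blocks Yanti Ycomm.
by exists Y; do !split => //; apply/funext => k; rewrite -DE.
Qed.

Lemma block_sub_skew : block_velocities `<=` skew_velocities.
Proof.
move=> _ [Y [Ysym [Ycross [Yoff [Ydiag ->]]]]].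
exists (block_generator Y); do !split.
- exact: trmx_block_generator.
- exact: block_generator_diag.
- by apply/funext => k; rewrite -block_generator_commutator.
Qed.

Lemma skew_sub_tangent_flag : skew_velocities `<=` tangent_space (flag R n s) f.
Proof.
move=> _ [A [skA [_ ->]]].
have [Q [Qorth Q0 dQ]] := skew_orthogonal_curve skA.
pose g t k := V *m Q t *m J k *m (Q t)^T *m V^T.
have dg k : is_derive_mx 0 (g^~ k) (V *m (A *m J k - J k *m A) *m V^T).
  have := is_derive_mxM (is_derive_mxM (is_derive_mxM (is_derive_mxM
    (is_derive_mx_cst 0 V) dQ) (is_derive_mx_cst 0 (J k))) (is_derive_mx_trmx dQ))
    (is_derive_mx_cst 0 V^T).
  rewrite Q0 trmx1 skA !mulmx0 !mul0mx !addr0 add0r !mulmx1.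
  by rewrite mulmxN mulmxBr !mulmxA.
exists g; split; [|split; [|split]].
- move=> t; exists (V *m Q t); split.
    by rewrite trmx_mul mulmxA -(mulmxA V) Qorth mulmx1 hV.
  by apply/funext => k; rewrite /g trmx_mul !mulmxA.
- by apply/funext => k; rewrite /g Q0 trmx1 !mulmx1.
- by move=> k; have [] := (is_derive_mxP _ _ _).1 (dg k).
- by apply/funext => k; have [_ ->] := (is_derive_mxP _ _ _).1 (dg k).
Qed.

End FlagTangentSpace.

Theorem proposition3p2 (R : realType) (n : nat) (s : seq nat)
  (hs : sorted ltn (0%N :: s ++ [:: n])) (V : 'M[R]_n)
  (hV : V *m V^T = 1%:M) :
  let f := (fun k : 'I_(size s) => V *m Jmx R n s k *m V^T) in
  tangent_space (flag R n s) f =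
    [set X | exists A : 'M[R]_n, A^T = - A /\
       (forall i j : 'I_n, blk s i = blk s j -> A i j = 0) /\
       X = (fun k : 'I_(size s) =>
              V *m (A *m Jmx R n s k - Jmx R n s k *m A) *m V^T)]
  /\
  tangent_space (flag R n s) f =
    [set X | exists Y : 'I_(size s) -> 'M[R]_n,
       (forall k, (Y k)^T = Y k) /\
       (forall (k l : 'I_(size s)) (i j : 'I_n), l != k ->
          blk s i = k -> blk s j = l -> Y k i j = - Y l i j) /\
       (forall (k : 'I_(size s)) (i j : 'I_n),
          blk s i <> k -> blk s j <> k -> Y k i j = 0) /\
       (forall (k : 'I_(size s)) (i j : 'I_n),
          blk s i = k -> blk s j = k -> Y k i j = 0) /\
       X = (fun k => V *m Y k *m V^T)].
Proof.
move=> f.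
have tangent_block := tangent_flag_sub_block hV.
have block_skew := @block_sub_skew R n s V.
have skew_tangent := skew_sub_tangent_flag hV.
split; apply/seteqP; split.
- by move=> X /tangent_block /block_skew.
- exact: skew_tangent.
- exact: tangent_block.
- by move=> X /block_skew /skew_tangent.
Qed.
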